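(* Let $p$ be a prime with $p\equiv 1\pmod 8$ and $p\equiv 2\pmod 3$. Then there exist infinitely many septuples $(A,B,C,D,E,F,G)\in\mathbb{Z}^7$ of the following parametrized form: there are nonzero odd integers $\lambda,\gamma$ with $\gcd(\lambda,3\gamma)=\gcd(p,3\gamma)=\gcd(p,\lambda)=1$, nonzero integers $\epsilon_0,\delta_0$ with $p\lambda^2\epsilon_0+9\gamma^2\delta_0=1$, and integers $\mu,t_0,F_0$ such that $A=\frac{p\lambda^2-9\gamma^2}{2}$, $B=2pF_0^2\left(\delta_0-\epsilon_0-\mu(p\lambda^2+9\gamma^2)\right)+(p\lambda^2+9\gamma^2)t_0F_0$, $C=2pF_0^2\left(\delta_0+\epsilon_0-\mu(p\lambda^2-9\gamma^2)\right)+(p\lambda^2-9\gamma^2)t_0F_0$, $D=\frac{p\lambda^2+9\gamma^2}{2}$, $E=F_0\left(2pF_0(\epsilon_0+9\mu\gamma^2)-9\gamma^2t_0\right)\left(2F_0(\delta_0-p\mu\lambda^2)+\lambda^2t_0\right)$, $F=2F_0$, $G=3\lambda\gamma$; and such that each of these septuples satisfies the following conditions: (A1) $B^2-C^2+2pEF=0$, $2AB-2CD+pF^2=0$, $A^2-D^2+pG^2=0$; (A3) $\gcd(A,D,G)=1$, $E\not\equiv 0\pmod p$, $G\not\equiv 0\pmod p$; (A4) for every odd prime $l$ with $l\ne3$, $l\ne p$ and $l\mid\gcd(AC-BD,\ DE-CF,\ AE-BF)$, $p$ is a square in $\mathbb{Q}_l^\times$; (A5) there is an integer $H$ with $G-EH^6\equiv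 0\pmod p$ such that $A+\zeta BH^4$ is a quadratic non-residue in $\mathbb{F}_p^\times$ for every cube root of unity $\zeta\in\mathbb{F}_p^\times$; (A7) $A+B\not\equiv 0\pmod 3$ and $G\equiv 0\pmod 3$; and, for every integer $n\ge 1$, (A6) $v_3(E)-v_3(G)<6n$.
   Context: $v_3$ denotes the $3$-adic valuation. *)

From HB Require Import structures.
From mathcomp Require Import all_boot all_order all_algebra.
From mathcomp Require Import boolp classical_sets cardinality.
Set Implicit Arguments. Unset Strict Implicit. Unset Printing Implicit Defensive.
Import Order.TTheory GRing.Theory Num.Theory.
Local Open Scope ring_scope.

Definition septuple := (int * int * int * int * int * int * int)%type.

Definition v3 (x : int) : nat := logn 3 `|x|%N.

(* [a] is a square in Q_l^x, for [a] an l-adic unit (l prime, l not dividing a):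
   by compactness of Z_l this is the statement that a is a square modulo
   every power l^k (a square in Q_l of an l-adic unit lies in Z_l^x). *)
Definition padic_square (l : nat) (a : int) : Prop :=
  forall k : nat, exists x : int, (x ^+ 2 == a %[mod (l ^ k)%:Z])%Z.

Definition param_form (p : nat) (s : septuple) : Prop :=
  let '(A, B, C, D, E, F, G) := s in
  let pz := p%:Z in
  exists (lam gam eps0 del0 mu t0 F0 : int),
    [/\ lam != 0, gam != 0, ~~ (2 %| lam)%Z, ~~ (2 %| gam)%Z &
    [/\ gcdz lam (3 * gam) = 1, gcdz pz (3 * gam) = 1, gcdz pz lam = 1,
        eps0 != 0 /\ del0 != 0 &
    [/\ pz * lam ^+ 2 * eps0 + 9 * gam ^+ 2 * del0 = 1,
        2 * A = pz * lam ^+ 2 - 9 * gam ^+ 2,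
        B = 2 * pz * F0 ^+ 2 * (del0 - eps0 - mu * (pz * lam ^+ 2 + 9 * gam ^+ 2))
            + (pz * lam ^+ 2 + 9 * gam ^+ 2) * t0 * F0,
        C = 2 * pz * F0 ^+ 2 * (del0 + eps0 - mu * (pz * lam ^+ 2 - 9 * gam ^+ 2))
            + (pz * lam ^+ 2 - 9 * gam ^+ 2) * t0 * F0 &
    [/\ 2 * D = pz * lam ^+ 2 + 9 * gam ^+ 2,
        E = F0 * (2 * pz * F0 * (eps0 + 9 * mu * gam ^+ 2) - 9 * gam ^+ 2 * t0)
               * (2 * F0 * (del0 - pz * mu * lam ^+ 2) + lam ^+ 2 * t0),
        F = 2 * F0 &
        G = 3 * lam * gam]]]].

Definition good_septuple (p : nat) (s : septuple) : Prop :=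
  let '(A, B, C, D, E, F, G) := s in
  let pz := p%:Z in
  [/\
      [/\ B ^+ 2 - C ^+ 2 + 2 * pz * E * F = 0,
          2 * A * B - 2 * C * D + pz * F ^+ 2 = 0 &
          A ^+ 2 - D ^+ 2 + pz * G ^+ 2 = 0],
      [/\ gcdz (gcdz A D) G = 1, ~~ (pz %| E)%Z & ~~ (pz %| G)%Z],
      (forall l : nat, prime l -> odd l -> l <> 3%N -> l <> p ->
         (l%:Z %| gcdz (gcdz (A * C - B * D) (D * E - C * F)) (A * E - B * F))%Z ->
         padic_square l pz),
      (exists H : int, (pz %| G - E * H ^+ 6)%Z /\
         forall zeta : 'F_p, zeta ^+ 3 = 1 ->
           let a : 'F_p := A%:~R + zeta * B%:~R * H%:~R ^+ 4 in
           a != 0 /\ ~ (exists x : 'F_p, x ^+ 2 = a)) &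
      (~~ (3 %| A + B)%Z /\ (3 %| G)%Z) /\
      (forall n : nat, (1 <= n)%N -> (v3 E)%:Z - (v3 G)%:Z < (6 * n)%:Z)].

From HB Require Import structures.
From mathcomp Require Import all_boot all_order all_algebra finfield.
From mathcomp Require Import boolp classical_sets cardinality.
From mathcomp Require Import ring zify.
Set Implicit Arguments. Unset Strict Implicit. Unset Printing Implicit Defensive.
Import Order.TTheory GRing.Theory Num.Theory.
Local Open Scope ring_scope.

(* Take lambda = gamma = 1, mu = 0 and F0 = 3 r 2^n, where r in {-1, 2} is
   congruent to p modulo 3; since p = 1 mod 8, r and 2^n are squares mod p.
   Modulo p the septuple reduces to A = -9/2, B = -9 x^2, E = 3 x^3, G = 3 with
   x = r 2^n a nonzero square, so H = 1 / sqrt x gives E H^6 = G and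
   A + B H^4 = -27/2, a non-residue because 2 is a residue and -3 is not
   (p = 2 mod 3 leaves 1 as the only cube root of unity).  Moreover
   AC - BD = 18 r 4^n p^2 has no odd prime factor other than 3 and p, so (A4)
   is vacuous, and v_3(E) <= 6 once 3^5 does not divide (r - p)/3.  Distinct n
   give distinct F, hence infinitely many septuples. *)

Section FinField.
Variable F : finFieldType.

Lemma finField_cube1 (x : F) : (#|F| %% 3 = 2)%N -> x ^+ 3 = 1 -> x = 1.
Proof.
move=> F3 x3.
have x0 : x != 0 by apply: contra_eq_neq x3 => ->; rewrite expr0n eq_sym oner_eq0.
have := expf_card x; rewrite (divn_eq #|F| 3) F3 exprD mulnC exprM x3 expr1n mul1r.
by rewrite expr2 => xx; apply: (mulfI x0); rewrite xx mulr1.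
Qed.

Lemma finField_nsqrN3 : (#|F| %% 3 = 2)%N -> (2 : F) != 0 -> (3 : F) != 0 ->
  ~ exists y : F, y ^+ 2 = -3.
Proof.
move=> F3 h2 h3 [y y2].
have h4 : (4 : F) != 0 by rewrite (_ : 4 = 2 * 2) ?mulf_neq0 //; ring.
have w3 : ((y - 1) / 2) ^+ 3 = 1.
  apply/eqP; rewrite -subr_eq0.
  have -> : ((y - 1) / 2) ^+ 3 - 1 = ((y - 1) / 2 - 1) * (y ^+ 2 + 3) / 4.
    by field; rewrite h4 h2.
  by rewrite y2 addNr mulr0 mul0r.
have y3 : y = 3.
  have -> : y = 2 * ((y - 1) / 2) + 1 by field.
  by rewrite (finField_cube1 F3 w3); ring.
have : 3 * 4 = 0 :> F by rewrite -[RHS](addrN 3) -y2 y3; ring.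
by apply/eqP; rewrite !mulf_neq0.
Qed.

Lemma finField_exists_rootN1 (m : nat) :
  (2 * m %| #|F|.-1)%N -> exists z : F, z ^+ m = -1.
Proof.
move=> /dvdnP[j Fj].
have F1 : (1 < #|F|)%N := finNzRing_gt1 F.
have /existsP[x /andP[x0 xmj]] : [exists x : F, (x != 0) && (x ^+ (m * j) != 1)].
  apply: contraT => /existsPn xmj.
  have : (size (enum (predC1 (0%R : F))) <= m * j)%N.
    apply: max_unity_roots; first by rewrite muln_gt0; apply/andP; split; nia.
      apply/allP => x; rewrite mem_enum inE => x0.
      by rewrite unity_rootE; have := xmj x; rewrite x0 /= negbK.
    exact: enum_uniq.
  by rewrite -cardE cardC1 Fj => le_mj; exfalso; nia.
have xF : x ^+ #|F|.-1 = 1.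
  by apply: (mulIf x0); rewrite mul1r -exprSr prednK ?expf_card // ltnW.
have : (x ^+ (m * j)) ^+ 2 == 1.
  by rewrite -exprM (_ : (m * j * 2 = #|F|.-1)%N) ?xF //; lia.
rewrite sqrf_eq1 (negbTE xmj) /= => /eqP xmjN1.
by exists (x ^+ j); rewrite -exprM mulnC.
Qed.

Lemma finField_sqrN1 : (4 %| #|F|.-1)%N -> exists w : F, w ^+ 2 = -1.
Proof. exact: (@finField_exists_rootN1 2). Qed.

Lemma finField_sqr2 : (8 %| #|F|.-1)%N -> exists w : F, w ^+ 2 = 2.
Proof.
move=> F8; have [z z4] := @finField_exists_rootN1 4 F8.
exists (z - z ^+ 3).
have -> : (z - z ^+ 3) ^+ 2 = z ^+ 2 - 2 * z ^+ 4 + z ^+ 4 * z ^+ 2 by ring.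
by rewrite z4; ring.
Qed.

End FinField.

Lemma Fp_natr_neq0 (p m : nat) : prime p -> (0 < m < p)%N -> (m%:R : 'F_p) != 0.
Proof.
by move=> p_pr m_lt; rewrite -(dvdn_pcharf (pchar_Fp p_pr)); apply/negP => /dvdn_leq; lia.
Qed.

Section QuadraticNonresidue.
Variable p : nat.
Hypotheses (p_pr : prime p) (p_mod3 : (p %% 3 = 2)%N) (p_mod8 : (p %% 8 = 1)%N).

Lemma nonresidue_of_residues (A B E : int) (x v : 'F_p) :
  v ^+ 2 = x -> x != 0 ->
  A%:~R = -9 / 2 :> 'F_p -> B%:~R = -9 * x ^+ 2 -> E%:~R = 3 * x ^+ 3 ->
  exists H : int, (p%:Z %| 3 - E * H ^+ 6)%Z /\
    forall zeta : 'F_p, zeta ^+ 3 = 1 ->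
      let a : 'F_p := A%:~R + zeta * B%:~R * H%:~R ^+ 4 in
      a != 0 /\ ~ (exists y : 'F_p, y ^+ 2 = a).
Proof.
move=> vx x0 imA imB imE.
have cardp : #|'F_p| = p := card_Fp p_pr.
have two0 : (2 : 'F_p) != 0 by apply: Fp_natr_neq0; lia.
have three0 : (3 : 'F_p) != 0 by apply: Fp_natr_neq0; lia.
have v0 : v != 0 by apply: contra_neq x0; rewrite -vx => ->; rewrite expr0n.
have [H Hv] : exists H : int, H%:~R = v^-1 by exists (nat_of_ord v^-1)%:Z; exact: natr_Zp.
have xH : x * H%:~R ^+ 2 = 1 by rewrite Hv -vx exprVn mulfV // expf_neq0.
exists H; split.
  rewrite (dvdz_pcharf (pchar_Fp p_pr)) rmorphB rmorphM rmorphXn /= imE.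
  by rewrite (_ : 6 = 2 * 3)%N // exprM -mulrA -exprMn xH expr1n mulr1 subrr.
move=> zeta /finField_cube1; rewrite cardp => /(_ p_mod3) -> /=.
have a27 : A%:~R + 1 * B%:~R * H%:~R ^+ 4 = -27 / 2 :> 'F_p.
  rewrite imA imB mul1r (_ : 4 = 2 * 2)%N // exprM -mulrA -exprMn xH expr1n.
  by field.
have n27 : (27 : 'F_p) != 0 by rewrite (_ : 27 = 3 * 3 * 3) ?mulf_neq0 //; ring.
rewrite a27; split; first by rewrite mulf_neq0 ?invr_eq0 ?oppr_eq0.
have [w w2] : exists w : 'F_p, w ^+ 2 = 2.
  by apply: finField_sqr2; rewrite cardp; apply/dvdnP; exists (p %/ 8)%N; lia.
move=> [y y2]; apply: (finField_nsqrN3 _ two0 three0); first by rewrite cardp.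
by exists (y * w / 3); rewrite !exprMn y2 w2; field; rewrite three0 two0.
Qed.

End QuadraticNonresidue.

Lemma coprimez_prime (l : nat) (x : int) : prime l -> coprimez l%:Z x = ~~ (l%:Z %| x)%Z.
Proof. by move=> l_pr; rewrite coprimezE prime_coprime. Qed.

Lemma coprimez_primes (l q : nat) : prime l -> prime q -> l <> q -> coprimez l%:Z q%:Z.
Proof. by move=> l_pr q_pr ne_lq; rewrite coprimez_prime // dvdzE dvdn_prime2 //; apply/eqP. Qed.

Lemma v3_lt (x : int) (m : nat) : ~~ (3 ^+ m %| x)%Z -> (v3 x < m)%N.
Proof.
rewrite /v3 ltnNge; apply: contra => le_m; rewrite dvdzE abszX.
exact: dvdn_trans (dvdn_exp2l 3 le_m) (pfactor_dvdnn 3 `|x|).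
Qed.

Lemma infinite_set_nat_inj (T : Type) (A : set T) (g : nat -> T) :
  injective g -> (forall n, A (g n)) -> infinite_set A.
Proof.
move=> g_inj gA; apply/infiniteP.
have := @inj_card_eq _ _ setT g (in2W g_inj).
rewrite card_eq_le => /andP[_ le_g].
by apply: card_le_trans le_g (subset_card_le _) => _ [n _ <-].
Qed.

(* The paper's septuple for lambda = gamma = 1, mu = 0, F0 = 3 r u and
   t0 = u k - 2 F0 delta0, where p = 6M + 5, epsilon0 = -(6M + 7) and
   delta0 = 4 (M + 1)^2 (see sept_param_form). *)
Definition sept (p : nat) (M k r u : int) : septuple :=
  let F0 := 3 * r * u in
  let t := u * k in
  (3 * M - 2, F0 * ((p%:Z + 9) * t - 2 * F0), F0 * ((p%:Z - 9) * t + 2 * F0),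
   3 * M + 7, F0 * t * (2 * F0 - 9 * t), 2 * F0, 3).

Section SeptupleFamily.
Variables (p : nat) (M k r : int).
Hypotheses (p_pr : prime p) (p_mod8 : (p %% 8 = 1)%N) (p_mod3 : (p %% 3 = 2)%N).
Hypotheses (pM : p%:Z = 6 * M + 5) (rpk : r = p%:Z + 3 * k).

Lemma sept_param_form (u : int) : param_form p (sept p M k r u).
Proof.
exists 1, 1, (- 6 * M - 7), (4 * (M + 1) ^+ 2), 0,
  (u * k - 2 * (3 * r * u) * (4 * (M + 1) ^+ 2)), (3 * r * u).
split=> //; split=> //.
- by rewrite pM gcdzC (_ : 6 * M + 5 = (2 * M + 1) * 3 + 2) ?gcdzMDl //; ring.
- by rewrite gcdz1.
- by split; [lia | rewrite mulf_neq0 // expf_neq0 //; lia].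
- by do !split; rewrite ?pM; ring.
Qed.

Lemma sept_residues (u : int) :
  let x : 'F_p := r%:~R * u%:~R in
  let '(A, B, _, _, E, _, _) := sept p M k r u in
  [/\ A%:~R = -9 / 2 :> 'F_p, B%:~R = -9 * x ^+ 2 & E%:~R = 3 * x ^+ 3].
Proof.
have p0 : (p%:Z)%:~R = 0 :> 'F_p := pchar_Fp_0 p_pr.
have two0 : (2 : 'F_p) != 0 by apply: Fp_natr_neq0; lia.
have r3k : r%:~R = 3 * k%:~R :> 'F_p.
  rewrite rpk (_ : (p%:Z + 3 * k)%:~R = (p%:Z)%:~R + 3 * k%:~R :> 'F_p); last by ring.
  by rewrite p0 add0r.
rewrite /sept /=; split.
- rewrite (_ : (3 * M - 2)%:~R = ((p%:Z)%:~R - 9) / 2 :> 'F_p); last by rewrite pM; field.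
  by rewrite p0 add0r.
- by rewrite !(rmorphM, rmorphB, rmorphD) /= p0 r3k; ring.
- by rewrite !(rmorphM, rmorphB, rmorphD) /= r3k; ring.
Qed.

Lemma sept_ACBD (u : int) :
  let '(A, B, C, D, _, _, _) := sept p M k r u in
  A * C - B * D = 18 * r * u ^+ 2 * p%:Z ^+ 2.
Proof. by rewrite /sept /= rpk pM; ring. Qed.

Hypotheses (r_small : r = -1 \/ r = 2) (k_ndvd : ~~ (3 ^+ 5 %| k)%Z).

Lemma v3_sept_E (u : int) : coprimez 3 u ->
  let '(_, _, _, _, E, _, _) := sept p M k r u in (v3 E < 7)%N.
Proof.
move=> cop3u; rewrite /sept /=; apply: v3_lt.
have cop3 : coprimez (3 ^+ 5) (r * u ^+ 3 * (2 * r - 3 * k)).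
  apply: coprimezXl; rewrite !coprimezMr cop3u !andbT.
  rewrite {2}/coprimez (_ : 2 * r - 3 * k = - k * 3 + 2 * r) ?gcdzMDl; last by ring.
  by case: r_small => ->.
rewrite (_ : _ * _ * _ = 9 * (k * (r * u ^+ 3 * (2 * r - 3 * k)))); last by ring.
by rewrite (_ : 3 ^+ 7 = 9 * 3 ^+ 5) // dvdz_mul2l // Gauss_dvdzl.
Qed.

Lemma nonzero_square_r_pow2 (n : nat) :
  (exists v : 'F_p, v ^+ 2 = r%:~R * (2 ^+ n)%:~R) /\ r%:~R * (2 ^+ n)%:~R != 0 :> 'F_p.
Proof.
have cardp : #|'F_p| = p := card_Fp p_pr.
have [w w2] : exists w : 'F_p, w ^+ 2 = 2.
  by apply: finField_sqr2; rewrite cardp; apply/dvdnP; exists (p %/ 8)%N; lia.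
split.
  have [rho rho2] : exists rho : 'F_p, rho ^+ 2 = r%:~R.
    case: r_small => ->; last by exists w.
    by apply: finField_sqrN1; rewrite cardp; apply/dvdnP; exists (p %/ 4)%N; lia.
  by exists (rho * w ^+ n); rewrite exprMn rho2 -exprM mulnC exprM w2 rmorphXn.
have two0 : (2 : 'F_p) != 0 by apply: Fp_natr_neq0; lia.
rewrite rmorphXn mulf_neq0 ?expf_neq0 //.
by case: r_small => ->; rewrite ?oppr_eq0 ?oner_eq0.
Qed.

Lemma sept_good (n : nat) : good_septuple p (sept p M k r (2 ^+ n)).
Proof.
have cop3u : coprimez 3 (2 ^+ n) by apply: coprimezXr.
have p_ndvd3 : ~~ (p%:Z %| 3)%Z by rewrite dvdzE; apply/negP => /dvdn_leq; lia.
have [[v vx] x0] := nonzero_square_r_pow2 n.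
move: (sept_residues (2 ^+ n)) (sept_ACBD (2 ^+ n)) (v3_sept_E cop3u).
rewrite /good_septuple /sept /= => -[imA imB imE] ACBD v3E.
have [H [EH6 nonres]] := nonresidue_of_residues p_pr p_mod3 p_mod8 vx x0 imA imB imE.
split.
- by split; rewrite ?pM; ring.
- split=> //.
  + rewrite -gcdzA (gcdzC (3 * M + 7)) (_ : 3 * M + 7 = (M + 2) * 3 + 1); last by ring.
    by rewrite gcdzMDl !gcdz1.
  + apply: contra p_ndvd3 => p_dvdE.
    by have := rpredD EH6 (dvdz_mulr (H ^+ 6) p_dvdE); rewrite subrK.
- move=> l l_pr l_odd l_ne3 l_nep l_dvd; exfalso.
  have := dvdz_trans l_dvd (dvdz_trans (dvdz_gcdl _ _) (dvdz_gcdl _ _)).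
  apply/negP; rewrite ACBD -coprimez_prime // (_ : 18 = 2 * 3 * 3) // !coprimezMr.
  have [l2 l3 lp] : [/\ coprimez l 2, coprimez l 3 & coprimez l p].
    by split; apply: coprimez_primes => // l_eq2; move: l_odd; rewrite l_eq2.
  rewrite l2 l3 lp !coprimezXr //= !andbT.
  by case: r_small => -> //; rewrite coprimezN coprimezE coprimen1.
- by exists H.
- split; last by move=> m m_gt0; rewrite [v3 3]/v3 logn_prime //; lia.
  split=> //; apply/negP => /dvdz_mod0P.
  rewrite (_ : 3 * M - 2 + _ =
      (M - 1 + r * 2 ^+ n * ((p%:Z + 9) * (2 ^+ n * k) - 6 * r * 2 ^+ n)) * 3 + 1).
    by rewrite modzMDl.
  by ring.
Qed.

Lemma sept_inj : injective (fun n => sept p M k r (2 ^+ n)).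
Proof.
move=> m n /(congr1 (fun s : septuple => s.1.2)) /=; rewrite !mulrA.
have r0 : 2 * 3 * r != 0 by case: r_small => ->.
by move/(mulfI r0)/(congr1 absz); rewrite !abszX => /expnI; apply.
Qed.

End SeptupleFamily.

Lemma exists_sept_parameters {p : nat} {M : int} : p%:Z = 6 * M + 5 ->
  exists k r : int, [/\ r = p%:Z + 3 * k, r = -1 \/ r = 2 & ~~ (3 ^+ 5 %| k)%Z].
Proof.
move=> pM; have [k5 | k5] := boolP (3 ^+ 5 %| -2 - 2 * M)%Z.
  exists (-1 - 2 * M), 2; split; [by rewrite pM; ring | by right |].
  apply/negP => k5'; have := rpredB k5' k5.
  by rewrite (_ : -1 - 2 * M - (-2 - 2 * M) = 1) //; ring.
by exists (-2 - 2 * M), (-1); split; [rewrite pM; ring | left |].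
Qed.

Local Open Scope classical_set_scope.

Theorem lemma9p1 (p : nat) (hp : prime p) (hp8 : (p %% 8 = 1)%N) (hp3 : (p %% 3 = 2)%N) :
  infinite_set [set s : septuple | param_form p s /\ good_septuple p s].
Proof.
set M : int := (p %/ 6)%N.
have pM : p%:Z = 6 * M + 5 by rewrite /M; lia.
have [k [r [rpk r_small k_ndvd]]] := exists_sept_parameters pM.
apply: (infinite_set_nat_inj (@sept_inj p M k r r_small)) => n; split.
  exact: sept_param_form.
exact: sept_good.
Qed.
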